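(* Let $k>0$ be an integer, $q\in[0,1]$, and let $m<M_{k,q}$. Let $h=h(n)$ satisfy $h(n)>2\,\mathbb{E}[X_{n,M_{k,q}}(k)]$. Then $$\Pr\left[X_{n,m}(k)<h^{-1}\cdot\mathbb{E}[X_{n,m}(k)]\right]\leq 2q.$$
   Context: $G^*(n,m)$ is the random graph on $n$ vertices obtained by inserting $m$ edges, each choosing its two endpoints uniformly at random with replacement, then deleting self-loops and replacing multiple edges by single edges. $X_{n,m}(k)=|\mathcal{S}_k(G^*(n,m))|$ is the number of independent sets of size exactly $k$ in $G^*(n,m)$, and $M_{k,q}=\max\{m\in\mathbb{N}:\Pr[X_{n,m}(k)>0]\geq1-q\}$. *)

From HB Require Import structures.
From mathcomp Require Import all_boot all_order all_algebra.
Set Implicit Arguments. Unset Strict Implicit. Unset Printing Implicit Defensive.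
Import Order.TTheory GRing.Theory Num.Theory.
Local Open Scope ring_scope.

(* Sample space of G*(n,m): each of the m edges picks an ordered pair of
   endpoints uniformly at random (with replacement); the uniform measure on
   {ffun 'I_m -> 'I_n * 'I_n} is exactly this process. *)
Notation edge_choice n m := {ffun 'I_m -> 'I_n * 'I_n}.

(* S is independent in G*(n,m) built from w: no (non-loop) edge has both
   endpoints in S.  Self-loops are deleted, multi-edges merged (which does
   not affect independence). *)
Definition indep_in (n m : nat) (w : edge_choice n m) (S : {set 'I_n}) : bool :=
  [forall i : 'I_m, ~~ [&& (w i).1 != (w i).2, (w i).1 \in S & (w i).2 \in S]].

Definition Xnmk (n m k : nat) (w : edge_choice n m) : nat :=
  #|[set S : {set 'I_n} | (#|S| == k) && indep_in w S]|.

Definition Pr (R : realFieldType) (n m : nat) (A : pred (edge_choice n m)) : R :=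
  (#|[set w : edge_choice n m | A w]|)%:R / (#|{: edge_choice n m}|)%:R.

Arguments Pr R n m A : clear implicits.

Definition EX (R : realFieldType) (n m k : nat) : R :=
  (\sum_(w : edge_choice n m) (Xnmk k w)%:R) / (#|{: edge_choice n m}|)%:R.

Arguments EX R n m k : clear implicits.

Definition is_Mkq (R : realFieldType) (n k : nat) (q : R) (M : nat) : Prop :=
  1 - q <= Pr R n M (fun w => 0 < Xnmk k w)%N /\
  forall m' : nat, 1 - q <= Pr R n m' (fun w => 0 < Xnmk k w)%N -> (m' <= M)%N.

(* Coupling: G*(n,M) is G*(n,m) followed by d = M - m further random edges.
   A fixed k-set stays independent through each extra edge with probability
   rho = (n^2 - (k^2 - k)) / n^2, so given the first m edges w1 the expected
   number of independent k-sets after all M edges is X(w1) rho^d, while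
   E[X_M] = E[X_m] rho^d.  If X(w1) < E[X_m]/h, this conditional expectation
   is below E[X_M]/h < 1/2, so by Markov the final graph has no independent
   k-set with conditional probability at least 1/2.  Hence
   Pr[X_m < E[X_m]/h] <= 2 Pr[X_M = 0] <= 2q. *)

From HB Require Import structures.
From mathcomp Require Import all_boot all_order all_algebra.
From mathcomp Require Import zify ring lra.
Import Order.TTheory GRing.Theory Num.Theory.
Local Open Scope ring_scope.
Set Implicit Arguments. Unset Strict Implicit.

Lemma card_edge_choice n m : #|{: edge_choice n m}| = ((n * n) ^ m)%N.
Proof. by rewrite card_ffun card_prod !card_ord. Qed.

Lemma cards_sum_indicator (T : finType) (P : pred T) :
  #|[set x | P x]| = (\sum_x P x)%N.
Proof.
by rewrite -sum1dep_card big_mkcond; apply: eq_bigr => x _; case: (P x).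
Qed.

Section ConcatEdges.

Variables n m d : nat.

Definition cat_edges (w1 : edge_choice n m) (w2 : edge_choice n d) :
    edge_choice n (m + d) :=
  [ffun i => match split i with inl a => w1 a | inr b => w2 b end].

Definition take_edges (w : edge_choice n (m + d)) : edge_choice n m :=
  [ffun i => w (lshift d i)].

Definition drop_edges (w : edge_choice n (m + d)) : edge_choice n d :=
  [ffun j => w (rshift m j)].

Lemma take_cat_edges w1 w2 : take_edges (cat_edges w1 w2) = w1.
Proof. by apply/ffunP => i; rewrite !ffunE (unsplitK (inl _ i)). Qed.

Lemma drop_cat_edges w1 w2 : drop_edges (cat_edges w1 w2) = w2.
Proof. by apply/ffunP => i; rewrite !ffunE (unsplitK (inr _ i)). Qed.

Lemma cat_take_drop_edges w : cat_edges (take_edges w) (drop_edges w) = w.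
Proof.
apply/ffunP => i; rewrite !ffunE; case: splitP => j Hj; rewrite ffunE;
  by congr (w _); apply: val_inj; rewrite /= Hj.
Qed.

Lemma indep_in_cat w1 w2 S :
  indep_in (cat_edges w1 w2) S = indep_in w1 S && indep_in w2 S.
Proof.
apply/forallP/andP => [H | [/forallP H1 /forallP H2] i].
- split; apply/forallP => i.
  + by have := H (lshift d i); rewrite ffunE (unsplitK (inl _ i)).
  + by have := H (rshift m i); rewrite ffunE (unsplitK (inr _ i)).
- by rewrite ffunE; case: (split i) => [a|b]; [exact: H1 | exact: H2].
Qed.

Lemma big_cat_edges (R : Type) (idx : R) (op : Monoid.com_law idx)
    (F : edge_choice n (m + d) -> R) :
  \big[op/idx]_w F w = \big[op/idx]_w1 \big[op/idx]_w2 F (cat_edges w1 w2).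
Proof.
rewrite pair_bigA (reindex (fun p => cat_edges p.1 p.2)) //.
exists (fun w => (take_edges w, drop_edges w)) => [[w1 w2] _|w _].
  by rewrite take_cat_edges drop_cat_edges.
exact: cat_take_drop_edges.
Qed.

Lemma card_cat_edges (B : pred (edge_choice n (m + d))) :
  #|[set w | B w]| = (\sum_w1 #|[set w2 | B (cat_edges w1 w2)]|)%N.
Proof.
rewrite cards_sum_indicator big_cat_edges.
by apply: eq_bigr => w1 _; rewrite cards_sum_indicator.
Qed.

End ConcatEdges.

Lemma card_spanned_pairs n (S : {set 'I_n}) :
  #|[set e : 'I_n * 'I_n | [&& e.1 != e.2, e.1 \in S & e.2 \in S]]|
    = (#|S| * #|S| - #|S|)%N.
Proof.
set D := [set (x, x) | x in S].
have -> : [set e : 'I_n * 'I_n | [&& e.1 != e.2, e.1 \in S & e.2 \in S]]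
          = setX S S :\: D.
  apply/setP => -[a b]; rewrite !inE /=.
  case: eqVneq => [<-|ne].
    case: (boolP (a \in S)) => Ha; rewrite ?andbF //.
    by rewrite (imset_f (fun x => (x, x)) Ha).
  suff -> : (a, b) \notin D by [].
  by apply/imsetP => -[x _ [Ha Hb]]; rewrite Ha Hb eqxx in ne.
have /setIidPr D_sub : D \subset setX S S.
  by apply/subsetP => _ /imsetP[x Hx ->]; rewrite inE /= Hx.
by rewrite cardsD D_sub cardsX card_imset // => x y [].
Qed.

(* Ordered endpoint pairs whose edge does not lie inside a fixed k-set:
   everything except the k^2 - k ordered pairs of distinct points of the set. *)
Definition safe_pairs (n k : nat) : nat := (n * n - (k * k - k))%N.

Lemma card_indep_in n d (S : {set 'I_n}) :
  #|[set w : edge_choice n d | indep_in w S]| = (safe_pairs n #|S| ^ d)%N.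
Proof.
set B := [set e : 'I_n * 'I_n | [&& e.1 != e.2, e.1 \in S & e.2 \in S]].
have <- : #|~: B| = safe_pairs n #|S|.
  by rewrite cardsCs setCK card_prod card_ord card_spanned_pairs.
rewrite -[d in RHS]card_ord -card_ffun_on; apply: eq_card => w; rewrite inE.
by apply/forallP/ffun_onP => H i; have := H i; rewrite !inE.
Qed.

Lemma XnmkE n m k (w : edge_choice n m) :
  Xnmk k w = (\sum_(S : {set 'I_n}) ((#|S| == k) && indep_in w S))%N.
Proof. exact: cards_sum_indicator. Qed.

Lemma sum_Xnmk_cat n m d k (w1 : edge_choice n m) :
  (\sum_(w2 : edge_choice n d) Xnmk k (cat_edges w1 w2)
     = Xnmk k w1 * safe_pairs n k ^ d)%N.
Proof.
under eq_bigr do rewrite XnmkE.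
rewrite exchange_big XnmkE big_distrl; apply: eq_bigr => S _.
under eq_bigr do rewrite indep_in_cat.
case: eqP => [<-|_]; last by rewrite big1.
case: (indep_in w1 S) => /=; last by rewrite big1.
by rewrite mul1n -card_indep_in cards_sum_indicator.
Qed.

Lemma EX_add (R : realFieldType) n m d k : (0 < n)%N ->
  EX R n (m + d) k
    = EX R n m k * (safe_pairs n k ^ d)%:R / ((n * n) ^ d)%:R.
Proof.
move=> n_gt0; have Npos : (0 < n * n)%N by rewrite muln_gt0 n_gt0.
rewrite /EX !card_edge_choice -!natr_sum big_cat_edges /=.
under eq_bigr do rewrite sum_Xnmk_cat.
rewrite -big_distrl natrM expnD natrM invfM; field.
by apply/andP; split; rewrite pnatr_eq0 -lt0n expn_gt0 Npos.
Qed.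

Lemma EX_ge0 (R : realFieldType) n m k : 0 <= EX R n m k.
Proof. by rewrite /EX divr_ge0 // -natr_sum. Qed.

(* First moment method, conditionally on the first m edges. *)
Lemma card_cat_edges_no_indep n m d k (w1 : edge_choice n m) :
  (2 * (Xnmk k w1 * safe_pairs n k ^ d) <= (n * n) ^ d)%N ->
  ((n * n) ^ d <= 2 * #|[set w2 : edge_choice n d
                         | Xnmk k (cat_edges w1 w2) == 0%N]|)%N.
Proof.
set Z := [set w2 | _]; set P := [set w2 : edge_choice n d
                                 | (0 < Xnmk k (cat_edges w1 w2))%N].
have ZP : (#|Z| + #|P| = (n * n) ^ d)%N.
  rewrite -card_edge_choice -(cardsC P) addnC; congr (_ + _)%N.
  by apply: eq_card => w2; rewrite !inE lt0n negbK.
have P_le : (#|P| <= Xnmk k w1 * safe_pairs n k ^ d)%N.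
  rewrite cards_sum_indicator -sum_Xnmk_cat; apply: leq_sum => w2 _.
  by case: (Xnmk k _).
lia.
Qed.

Lemma card_no_indep_ge n m d k (A : {set edge_choice n m}) :
  {in A, forall w1, 2 * (Xnmk k w1 * safe_pairs n k ^ d) <= (n * n) ^ d}%N ->
  (#|A| * (n * n) ^ d
     <= 2 * #|[set w : edge_choice n (m + d) | Xnmk k w == 0%N]|)%N.
Proof.
move=> small; rewrite card_cat_edges big_distrr (bigID (mem A)) /=.
apply: leq_trans (leq_addr _ _); rewrite -sum_nat_const.
by apply: leq_sum => w1 /small/card_cat_edges_no_indep.
Qed.

Lemma Pr_le1 (R : realFieldType) n m A : Pr R n m A <= 1.
Proof.
rewrite /Pr; have [->|H] := posnP #|{: edge_choice n m}|.
  by rewrite invr0 mulr0.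
by rewrite ler_pdivrMr ?ltr0n // mul1r ler_nat max_card.
Qed.

Lemma PrC (R : realFieldType) n m (A : pred (edge_choice n m)) : (0 < n)%N ->
  Pr R n m (predC A) = 1 - Pr R n m A.
Proof.
move=> n_gt0; have Npos : (0 < #|{: edge_choice n m}|)%N.
  by rewrite card_edge_choice expn_gt0 muln_gt0 n_gt0.
have /(congr1 (fun x => x%:R : R)) := cardsC [set w | A w].
rewrite natrD => sizeE.
rewrite /Pr (_ : #|[set w | predC A w]| = #|~: [set w | A w]|).
  by rewrite -sizeE; field; rewrite sizeE pnatr_eq0 -lt0n.
by apply: eq_card => w; rewrite !inE.
Qed.

Lemma Pr_small_X_le (R : realFieldType) n m d k (h : R) : (0 < n)%N ->
  2 * EX R n (m + d) k < h ->
  Pr R n m (fun w => (Xnmk k w)%:R < h^-1 * EX R n m k)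
    <= 2 * Pr R n (m + d) (fun w => Xnmk k w == 0%N).
Proof.
move=> n_gt0 EX_lt_h.
have Npos j : (0 : R) < ((n * n) ^ j)%:R by rewrite ltr0n expn_gt0 muln_gt0 n_gt0.
have h_gt0 : 0 < h by have := EX_ge0 R n (m + d) k; lra.
set c := (safe_pairs n k ^ d)%N.
set A := [set w1 : edge_choice n m | (Xnmk k w1)%:R < h^-1 * EX R n m k].
have small : {in A, forall w1, 2 * (Xnmk k w1 * c) <= (n * n) ^ d}%N.
  move=> w1; rewrite inE => X_lt; rewrite -(ler_nat R) !natrM.
  have := EX_lt_h; rewrite EX_add // mulrA ltr_pdivrMr //.
  have : (Xnmk k w1)%:R * h <= EX R n m k.
    by rewrite -ler_pdivlMr // mulrC ltW.
  have := ler0n R c; have := Npos d; nra.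
have := card_no_indep_ge small; rewrite -(ler_nat R) !natrM.
rewrite /Pr !card_edge_choice expnD natrM => card_le.
set Z := #|[set w : edge_choice n (m + d) | _]|%:R in card_le *.
have -> : 2 * (Z / (((n * n) ^ m)%:R * ((n * n) ^ d)%:R))
        = 2 * Z / ((n * n) ^ d)%:R / ((n * n) ^ m)%:R.
  by field; rewrite !gt_eqF.
by rewrite ler_pM2r ?invr_gt0 // ler_pdivlMr.
Qed.

Theorem lemma4p3 (R : realFieldType) (n k : nat) (q h : R) (M m : nat) :
  (0 < k)%N -> 0 <= q <= 1 -> is_Mkq n k q M -> (m < M)%N ->
  2 * EX R n M k < h ->
  Pr R n m (fun w => (Xnmk k w)%:R < h^-1 * EX R n m k) <= 2 * q.
Proof.
move=> _ /andP[q_ge0 _] [Pr_M_ge _] m_lt_M EX_lt_h.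
have := Pr_le1 R (fun w : edge_choice n m => (Xnmk k w)%:R < h^-1 * EX R n m k).
have [n0|n_gt0] := posnP n.
  (* G*(0,M) has an empty sample space, so Pr is 0/0 = 0 and q = 1. *)
  move: Pr_M_ge; rewrite /Pr card_edge_choice n0 exp0n.
    by rewrite invr0 mulr0; lra.
  exact: leq_ltn_trans m_lt_M.
rewrite -(subnKC (ltnW m_lt_M)) in Pr_M_ge EX_lt_h.
have := Pr_small_X_le n_gt0 EX_lt_h.
have -> : Pr R n (m + (M - m)) (fun w => Xnmk k w == 0%N)
        = Pr R n (m + (M - m)) (predC (fun w => 0 < Xnmk k w)%N).
  by congr (_%:R / _); apply: eq_card => w; rewrite !inE lt0n negbK.
rewrite PrC //; lra.
Qed.
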